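(* Let $\mathcal{Q}$ be a parabolic subset of $\mathcal{R}$, $\mathrm{s}$ an involution of $\mathcal{R}$, and $C$ a $V$-fit Weyl chamber for $(\mathcal{Q},\mathrm{s})$, with $\Phi_C=\mathcal{B}(C)\cap\mathcal{Q}^n$. The following are equivalent: (1) $\mathcal{Q}\cup\mathrm{s}(\mathcal{Q})=\mathcal{R}$ (i.e. $(\mathcal{Q},\mathrm{s})$ is totally complex); (2) $\mathrm{s}(\mathcal{Q}^n)\subseteq\mathcal{R}^-(C)$; (3) $\mathrm{s}(\Phi_C)\subseteq\mathcal{R}^-(C)$.
   Context: $\mathcal{R}$ is a reduced root system in a Euclidean space $V$. Closed subset: $\alpha,\beta\in\mathcal{Q}$, $\alpha+\beta\in\mathcal{R}\Rightarrow\alpha+\beta\in\mathcal{Q}$; parabolic: closed with $\mathcal{Q}\cup(-\mathcal{Q})=\mathcal{R}$. $\mathcal{Q}^n=\{\alpha\in\mathcal{Q}\mid-\alpha\notin\mathcal{Q}\}$. For a Weyl chamber $C$: $\mathcal{R}^\pm(C)$ positive/negative roots, $\mathcal{B}(C)$ simple roots. $C$ is admissible for $\mathcal{Q}$ if $\mathcal{R}^+(C)\subseteq\mathcal{Q}$. An involution of $\mathcal{R}$ is a linear isometric involution $\mathrm{s}$ of $V$ with $\mathrm{s}(\mathcal{R})=\mathcal{R}$; a root $\alpha$ is real if $\mathrm{s}(\alpha)=\alpha$, imaginary if $\mathrm{s}(\alpha)=-\alpha$, complex otherwise. An admissible chamber $C$ is $V$-fit for $(\mathcal{Q},\mathrm{s})$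 if $\mathrm{s}(\alpha)\in\mathcal{R}^-(C)$ for every complex $\alpha\in\mathcal{B}(C)\setminus\Phi_C$. *)

From HB Require Import structures.
From mathcomp Require Import all_boot all_order all_algebra.
From mathcomp Require Import reals.
Set Implicit Arguments. Unset Strict Implicit. Unset Printing Implicit Defensive.
Import Order.TTheory GRing.Theory Num.Theory.
Local Open Scope ring_scope.

Section RootSystems.
Variables (R : realType) (n : nat).
Notation V := 'rV[R]_n.

Definition dot (u v : V) : R := (u *m v^T) 0 0.

Definition refl (a v : V) : V := v - ((2 * dot v a) / dot a a) *: a.

Definition root_system (Rs : seq V) : Prop :=
  [/\ row_full (\matrix_(i < size Rs) nth 0 Rs i),
      (0 : V) \notin Rs,
      (forall a b, a \in Rs -> b \in Rs -> refl a b \in Rs) &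
      (forall a b, a \in Rs -> b \in Rs ->
         exists k : int, (2 * dot b a) / dot a a = k%:~R)].

Definition reduced (Rs : seq V) : Prop :=
  forall (a : V) (c : R), a \in Rs -> c *: a \in Rs -> c = 1 \/ c = -1.

Definition closed_subset (Rs : seq V) (Q : V -> Prop) : Prop :=
  (forall a, Q a -> a \in Rs) /\
  (forall a b, Q a -> Q b -> a + b \in Rs -> Q (a + b)).

Definition parabolic (Rs : seq V) (Q : V -> Prop) : Prop :=
  closed_subset Rs Q /\ (forall a, a \in Rs -> Q a \/ Q (- a)).

Definition Qn (Q : V -> Prop) (a : V) : Prop := Q a /\ ~ Q (- a).

(* an involution of Rs: linear isometric involution of V (acting on row
   vectors by v |-> v *m S) preserving Rs *)
Definition root_involution (Rs : seq V) (S : 'M[R]_n) : Prop :=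
  [/\ S *m S = 1%:M, S *m S^T = 1%:M & forall a, a \in Rs -> a *m S \in Rs].

Definition complex_root (S : 'M[R]_n) (a : V) : Prop :=
  a *m S <> a /\ a *m S <> - a.

(* Weyl chambers: connected components of V minus the union of the root
   hyperplanes, i.e. the sets of vectors having the same sign pattern
   against all roots as some regular vector v. *)
Definition weyl_chamber (Rs : seq V) (C : V -> Prop) : Prop :=
  exists v : V, (forall a, a \in Rs -> dot a v != 0) /\
    (forall w, C w <-> (forall a, a \in Rs -> 0 < dot a w * dot a v)).

Definition pos_root (Rs : seq V) (C : V -> Prop) (a : V) : Prop :=
  a \in Rs /\ forall w, C w -> 0 < dot a w.

Definition neg_root (Rs : seq V) (C : V -> Prop) (a : V) : Prop :=
  a \in Rs /\ forall w, C w -> dot a w < 0.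

Definition simple_root (Rs : seq V) (C : V -> Prop) (a : V) : Prop :=
  pos_root Rs C a /\
  ~ (exists b c, [/\ pos_root Rs C b, pos_root Rs C c & a = b + c]).

Definition admissible (Rs : seq V) (Q : V -> Prop) (C : V -> Prop) : Prop :=
  forall a, pos_root Rs C a -> Q a.

Definition PhiC (Rs : seq V) (Q : V -> Prop) (C : V -> Prop) (a : V) : Prop :=
  simple_root Rs C a /\ Qn Q a.

Definition V_fit (Rs : seq V) (Q : V -> Prop) (S : 'M[R]_n) (C : V -> Prop)
  : Prop :=
  admissible Rs Q C /\
  forall a, simple_root Rs C a -> ~ PhiC Rs Q C a -> complex_root S a ->
    neg_root Rs C (a *m S).

End RootSystems.

From HB Require Import structures.
From mathcomp Require Import all_boot all_order all_algebra.
From mathcomp Require Import reals.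
From Stdlib Require Import Classical.
Set Implicit Arguments.
Import Order.TTheory GRing.Theory Num.Theory.
Local Open Scope ring_scope.

(* Height with respect to the regular vector v defining C is additive, so
   every non-simple positive root is a sum of two positive roots of smaller
   height and properties stable under such sums propagate from B(C) to R^+(C).
   For a simple root z outside Phi_C we have -s(z) \in Q: by V-fitness if z is
   complex, and from z \notin Q^n if s(z) = z or s(z) = -z.  Closedness of Q
   makes "-s(z) \in Q" stable under sums, so (3) yields -s(R^+(C)) \subset Q,
   which rules out s(a) \in R^+(C) for a \in Q^n; and under (2) a root
   a \notin Q has -a \in Q^n, so a = s(s(a)) with s(a) \in R^+(C) \subset Q.
   For (1) => (2) the same induction propagates the implication
   "-z \in Q => -s(z) \in Q": if s(a) were positive for some a \in Q^n, then
   (1) for -a gives -s(a) \in Q and hence -a \in Q. *)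

Section RootSystemFacts.
Variables (R : realType) (n : nat).
Local Notation V := 'rV[R]_n.

Lemma dotDl (x y w : V) : dot (x + y) w = dot x w + dot y w.
Proof. by rewrite /dot mulmxDl mxE. Qed.

Lemma dotNl (x w : V) : dot (- x) w = - dot x w.
Proof. by rewrite /dot mulNmx mxE. Qed.

Lemma dotxx_eq0 (x : V) : (dot x x == 0) = (x == 0).
Proof.
have sq j : x 0 j * x^T j 0 = x 0 j ^+ 2 by rewrite mxE expr2.
rewrite /dot mxE psumr_eq0 => [|j _]; last by rewrite sq sqr_ge0.
apply/allP/eqP => [x0 | -> j _]; last by rewrite !mxE mul0r eqxx.
apply/matrixP => i j; rewrite !mxE ord1; apply/eqP.
by rewrite -sqrf_eq0 -sq; apply: (implyP (x0 j (mem_index_enum j))).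
Qed.

Lemma refl_id (a : V) : a != 0 -> refl a a = - a.
Proof.
move=> a0; rewrite /refl mulfK ?dotxx_eq0 //.
by rewrite scaler_nat mulr2n opprD addNKr.
Qed.

Lemma root_system_opp (Rs : seq V) :
  root_system Rs -> {in Rs, forall a, - a \in Rs}.
Proof.
case=> _ Rs0 Rs_refl _ a aR; have a0 : a != 0 by apply: contraNneq Rs0 => <-.
by rewrite -refl_id //; apply: Rs_refl.
Qed.

End RootSystemFacts.

Section WeylChambers.
Variables (R : realType) (n : nat) (Rs : seq 'rV[R]_n) (C : 'rV[R]_n -> Prop).
Local Notation V := 'rV[R]_n.
Hypothesis Rs_root_system : root_system Rs.
Hypothesis C_chamber : weyl_chamber Rs C.

Lemma pos_or_neg_root a : a \in Rs -> pos_root Rs C a \/ neg_root Rs C a.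
Proof.
case: C_chamber => v [v_reg C_def] aR.
have := v_reg a aR; rewrite neq_lt => /orP [av_lt0 | av_gt0].
  by right; split => // w /C_def /(_ a aR); rewrite nmulr_lgt0.
by left; split => // w /C_def /(_ a aR); rewrite pmulr_lgt0.
Qed.

Lemma pos_rootN a : neg_root Rs C a -> pos_root Rs C (- a).
Proof.
case=> aR a_neg; split; first exact: root_system_opp.
by move=> w /a_neg; rewrite dotNl oppr_gt0.
Qed.

Lemma pos_root_ind (P : V -> Prop) :
  (forall z, simple_root Rs C z -> P z) ->
  (forall b c, pos_root Rs C b -> pos_root Rs C c -> pos_root Rs C (b + c) ->
     P b -> P c -> P (b + c)) ->
  forall z, pos_root Rs C z -> P z.
Proof.
move=> P_simple P_add.
have [v [v_reg C_def]] := C_chamber.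
have Cv : C v.
  by apply/C_def => a aR; rewrite -expr2 exprn_even_gt0 ?v_reg ?orbT.
pose heights := [seq dot a v | a <- Rs].
pose ht z := count (< dot z v) heights.
have ht_lt b z : b \in Rs -> dot b v < dot z v -> (ht b < ht z)%N.
  move=> bR bz; apply: (@leq_trans (count (<= dot b v) heights)).
    by rewrite count_lt_le_mem; apply: map_f.
  by apply: sub_count => y /= yb; apply: le_lt_trans yb bz.
move=> z; have [k] := ubnP (ht z); elim: k z => // k IH z.
rewrite ltnS => z_ht z_pos.
have [[b [c [b_pos c_pos z_bc]]] | z_indecomposable] :=
  classic (exists b c, [/\ pos_root Rs C b, pos_root Rs C c & z = b + c]);
  last exact: P_simple.
have b_v := b_pos.2 v Cv; have c_v := c_pos.2 v Cv.
rewrite z_bc in z_ht z_pos *.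
apply: P_add => //; [apply: (IH b) | apply: (IH c)] => //.
- by rewrite (leq_trans _ z_ht) // ht_lt ?b_pos.1 // dotDl ltrDl.
- by rewrite (leq_trans _ z_ht) // ht_lt ?c_pos.1 // dotDl ltrDr.
Qed.

End WeylChambers.

Section TotallyComplex.
Variables (R : realType) (n : nat) (Rs : seq 'rV[R]_n) (Q : 'rV[R]_n -> Prop).
Variables (S : 'M[R]_n) (C : 'rV[R]_n -> Prop).
Local Notation V := 'rV[R]_n.
Hypothesis Rs_root_system : root_system Rs.
Hypothesis Q_parabolic : parabolic Rs Q.
Hypothesis S_involution : root_involution Rs S.
Hypothesis C_chamber : weyl_chamber Rs C.
Hypothesis C_fit : V_fit Rs Q S C.

Lemma Q_root a : Q a -> a \in Rs.
Proof. by case: Q_parabolic => -[Q_Rs _] _; apply: Q_Rs. Qed.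

Lemma Q_add a b : Q a -> Q b -> a + b \in Rs -> Q (a + b).
Proof. by case: Q_parabolic => -[_ Q_closed] _; apply: Q_closed. Qed.

Lemma Q_pos_root a : pos_root Rs C a -> Q a.
Proof. by case: C_fit => C_adm _; apply: C_adm. Qed.

Lemma Q_oppr_neg_root a : neg_root Rs C a -> Q (- a).
Proof. by move=> a_neg; apply/Q_pos_root/pos_rootN. Qed.

Lemma mulmxSS (a : V) : a *m S *m S = a.
Proof. by case: S_involution => SS _ _; rewrite -mulmxA SS mulmx1. Qed.

Lemma root_mulmxS a : a \in Rs -> a *m S \in Rs.
Proof. by case: S_involution => _ _ S_Rs; apply: S_Rs. Qed.

Lemma simple_image_in_negQ z :
  simple_root Rs C z -> ~ PhiC Rs Q C z -> Q (- (z *m S)).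
Proof.
move=> z_simple z_PhiC; have Qz := Q_pos_root z_simple.1.
have [z_complex | z_noncomplex] := classic (complex_root S z).
  by apply/Q_oppr_neg_root/C_fit.2.
have [z_real | z_nonreal] := classic (z *m S = z).
  by rewrite z_real; apply: NNPP => Q_oppz; apply: z_PhiC.
have [z_imag | z_nonimag] := classic (z *m S = - z).
  by rewrite z_imag opprK.
by case: z_noncomplex.
Qed.

Lemma image_in_negQ_add b c : pos_root Rs C (b + c) ->
  Q (- (b *m S)) -> Q (- (c *m S)) -> Q (- ((b + c) *m S)).
Proof.
move=> bc_pos Qb Qc; rewrite mulmxDl opprD; apply: Q_add => //.
by rewrite -opprD -mulmxDl; apply/root_system_opp/root_mulmxS/bc_pos.1.
Qed.

Lemma Q_opp_summand a d : a \in Rs -> Q d -> Q (- (a + d)) -> Q (- a).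
Proof.
move=> aR Qd Q_oppad; have opp_a : - a = - (a + d) + d by rewrite opprD subrK.
by rewrite opp_a; apply: Q_add => //; rewrite -opp_a; apply: root_system_opp.
Qed.

Lemma pos_image_in_negQ_of_negQ z :
  pos_root Rs C z -> Q (- z) -> Q (- (z *m S)).
Proof.
move: z; apply: (pos_root_ind C_chamber).
  move=> z z_simple Q_oppz; apply: simple_image_in_negQ => // -[_ [_ z_Qn]].
  exact: z_Qn.
move=> b c b_pos c_pos bc_pos IHb IHc Q_oppbc.
apply: image_in_negQ_add => //; [apply: IHb | apply: IHc].
  exact: Q_opp_summand b_pos.1 (Q_pos_root c_pos) Q_oppbc.
rewrite addrC in Q_oppbc.
exact: Q_opp_summand c_pos.1 (Q_pos_root b_pos) Q_oppbc.
Qed.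

Lemma pos_image_in_negQ :
  (forall a, PhiC Rs Q C a -> neg_root Rs C (a *m S)) ->
  forall z, pos_root Rs C z -> Q (- (z *m S)).
Proof.
move=> PhiC_neg.
apply: (pos_root_ind C_chamber) => [z z_simple | b c _ _ bc_pos].
  have [/PhiC_neg/Q_oppr_neg_root // | z_PhiC] := classic (PhiC Rs Q C z).
  exact: simple_image_in_negQ.
exact: image_in_negQ_add.
Qed.

Lemma image_Qn_neg_root :
  (forall z, pos_root Rs C z -> Q (- (z *m S))) ->
  forall a, Qn Q a -> neg_root Rs C (a *m S).
Proof.
move=> pos_negQ a [Qa Q_oppa].
have [aS_pos | //] := pos_or_neg_root C_chamber _ (root_mulmxS _ (Q_root Qa)).
by case: Q_oppa; rewrite -[a in - a]mulmxSS; apply: pos_negQ.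
Qed.

Lemma totally_complex_image_Qn_neg_root :
  (forall a, a \in Rs -> Q a \/ exists b, Q b /\ a = b *m S) ->
  forall a, Qn Q a -> neg_root Rs C (a *m S).
Proof.
move=> Q_sQ a [Qa Q_oppa].
have [aS_pos | //] := pos_or_neg_root C_chamber _ (root_mulmxS _ (Q_root Qa)).
have Q_opp_aS : Q (- (a *m S)).
  have opp_aR := root_system_opp Rs_root_system _ (Q_root Qa).
  have [// | [b [Qb opp_a]]] := Q_sQ _ opp_aR.
  by rewrite -mulNmx opp_a mulmxSS.
by case: Q_oppa; rewrite -[a in - a]mulmxSS; apply: pos_image_in_negQ_of_negQ.
Qed.

Lemma image_Qn_neg_root_totally_complex :
  (forall a, Qn Q a -> neg_root Rs C (a *m S)) ->
  forall a, a \in Rs -> Q a \/ exists b, Q b /\ a = b *m S.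
Proof.
move=> Qn_neg a aR; have [Qa | Q_na] := classic (Q a); [by left | right].
have Q_oppa : Q (- a) by case: Q_parabolic => _ /(_ a aR) [].
exists (a *m S); split; last by rewrite mulmxSS.
apply: Q_pos_root; rewrite -[a *m S]opprK -mulNmx.
by apply: (pos_rootN Rs_root_system); apply: Qn_neg; split; rewrite ?opprK.
Qed.

End TotallyComplex.

Theorem mainTheorem10 (R : realType) (n : nat) (Rs : seq 'rV[R]_n)
  (Q : 'rV[R]_n -> Prop) (S : 'M[R]_n) (C : 'rV[R]_n -> Prop) :
  root_system Rs -> reduced Rs -> parabolic Rs Q -> root_involution Rs S ->
  weyl_chamber Rs C -> V_fit Rs Q S C ->
  [<-> (forall a, a \in Rs -> Q a \/ exists b, Q b /\ a = b *m S);
       (forall a, Qn Q a -> neg_root Rs C (a *m S));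
       (forall a, PhiC Rs Q C a -> neg_root Rs C (a *m S))].
Proof.
move=> Rs_root _ Q_par S_inv C_chamber C_fit; tfae.
- exact: totally_complex_image_Qn_neg_root.
- by move=> Qn_neg a [_ a_Qn]; apply: Qn_neg.
- move=> /(pos_image_in_negQ Rs_root Q_par S_inv C_chamber C_fit).
  move=> /(image_Qn_neg_root Q_par S_inv C_chamber).
  exact: image_Qn_neg_root_totally_complex.
Qed.
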